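(* Let $s\le k$ be positive integers and let $\tau_1,\dots,\tau_k\in(0,1]$ be distinct abscissae. Let $\omega_1,\dots,\omega_k$ be the weights of the interpolatory quadrature formula on $[0,1]$ based at these abscissae, i.e. $\omega_j=\int_0^1\ell_j(x)\,\mathrm{d}x$, where $\ell_j$ is the $j$th Lagrange polynomial of degree $k-1$ on the nodes $\{\tau_i\}$. Assume that this quadrature formula is exact for all polynomials of degree $2s-1$. Let $P_j(t)=\sqrt{2j-1}\,\hat P_{j-1}(t)$, $j\ge1$, where $\hat P_{j-1}$ is the shifted Legendre polynomial of degree $j-1$ on $[0,1]$ (so that $\int_0^1P_iP_j\,\mathrm{d}t=\delta_{ij}$). Define $\Omega=\mathrm{diag}(\omega_1,\dots,\omega_k)$ and the $k\times s$ matrices $\mathcal I_s,\mathcal P_s$ with entries $(\mathcal I_s)_{ij}=\int_0^{\tau_i}P_j(x)\,\mathrm{d}x$ and $(\mathcal P_s)_{ij}=P_j(\tau_i)$, and let $$A=\mathcal I_s\,\mathcal P_s^T\,\Omega\in\mathbb R^{k\times k}.$$ Then the nonzero eigenvalues of $A$ coincide with the eigenvalues of the Butcher matrix of the $s$-stage Gauss-Legendre Runge-Kutta method of order $2s$.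
   Context: The Butcher matrix of the $s$-stage Gauss-Legendre method of order $2s$ is the $s\times s$ matrix with entries $\int_0^{c_i}L_j(x)\,\mathrm{d}x$, where $c_1,\dots,c_s$ are the zeros of the shifted Legendre polynomial of degree $s$ on $[0,1]$ and $L_j$ is the $j$th Lagrange polynomial of degree $s-1$ on these nodes. The matrix $A$ is the Butcher matrix of the Runge-Kutta method called HBVM$(k,s)$ (Hamiltonian Boundary Value Method with $k$ steps and degree $s$) with abscissae $\tau_i$ and weights $\omega_i$. *)

From HB Require Import structures.
From mathcomp Require Import all_boot all_order all_algebra.
From mathcomp Require Import complex.
Set Implicit Arguments. Unset Strict Implicit. Unset Printing Implicit Defensive.
Import Order.TTheory GRing.Theory Num.Theory.
Local Open Scope ring_scope.

Definition pint (R : fieldType) (p : {poly R}) (c : R) : R :=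
  \sum_(i < size p) p`_i * c ^+ i.+1 / (i.+1)%:R.

Definition shLeg (R : nzRingType) (n : nat) : {poly R} :=
  \poly_(m < n.+1) ((-1) ^+ (n + m) * ('C(n, m) * 'C(n + m, m))%:R).

(* Normalized shifted Legendre polynomial P_{n+1} = sqrt(2n+1) hatP_n
   (0-based index n, i.e. P_j with j = n+1). *)
Definition normLeg (R : rcfType) (n : nat) : {poly R} :=
  Num.sqrt ((2 * n + 1)%:R : R) *: shLeg R n.

Definition lagr (R : fieldType) (m : nat) (t : 'I_m -> R) (j : 'I_m) : {poly R} :=
  \prod_(l < m | l != j) (('X - (t l)%:P) * ((t j - t l)^-1)%:P).

Definition quad_weight (R : fieldType) (m : nat) (t : 'I_m -> R) (j : 'I_m) : R :=
  pint (lagr t j) 1.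

Definition Imat (R : rcfType) (k s : nat) (tau : 'I_k -> R) : 'M[R]_(k, s) :=
  \matrix_(i < k, j < s) pint (normLeg R j) (tau i).

Definition Pmat (R : rcfType) (k s : nat) (tau : 'I_k -> R) : 'M[R]_(k, s) :=
  \matrix_(i < k, j < s) (normLeg R j).[tau i].

Definition Omega (R : fieldType) (k : nat) (tau : 'I_k -> R) : 'M[R]_k :=
  diag_mx (\row_(j < k) quad_weight tau j).

Definition hbvmA (R : rcfType) (k s : nat) (tau : 'I_k -> R) : 'M[R]_k :=
  Imat s tau *m (Pmat s tau)^T *m Omega tau.

(* Butcher matrix of a collocation method on nodes c: entries int_0^{c_i} L_j. *)
Definition collocA (R : fieldType) (s : nat) (c : 'I_s -> R) : 'M[R]_s :=
  \matrix_(i < s, j < s) pint (lagr c j) (c i).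

Definition toCmx (R : rcfType) (m : nat) (M : 'M[R]_m) : 'M[R[i]]_m :=
  map_mx (fun x => Complex x 0) M.

(* The k x k matrix A = I_s (P_s^T Omega) has the same nonzero eigenvalues as
   the s x s matrix G = P_s^T Omega I_s.  Since the quadrature is exact up to
   degree 2s-1, G is the matrix of the integrals int_0^1 P_n (int_0^. P_m).
   At the Gauss nodes c_i, the zeros of P_(s+1), expanding int_0^(c_i) P_m in
   the orthonormal basis P_1, ..., P_(s+1) gives C V = V G, where C is the
   Gauss-Legendre Butcher matrix and V = (P_n(c_i)); V is invertible because a
   combination of P_1, ..., P_s, of degree < s, cannot vanish at s points.
   So C is similar to G.  Orthonormality of the P_j follows from Rodrigues'
   formula by repeated integration by parts. *)

From HB Require Import structures.
From mathcomp Require Import all_boot all_order all_algebra.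
From mathcomp Require Import complex.
From mathcomp Require Import ring.
Set Implicit Arguments. Unset Strict Implicit. Unset Printing Implicit Defensive.
Import Order.TTheory GRing.Theory Num.Theory.
Local Open Scope ring_scope.

Section PolyIntegral.
Variable R : fieldType.
Implicit Types (p q : {poly R}) (c : R).

Lemma pint_widen n p c : (size p <= n)%N ->
  pint p c = \sum_(i < n) p`_i * c ^+ i.+1 / (i.+1)%:R.
Proof.
move=> le_p_n; rewrite /pint (big_ord_widen n (fun i => p`_i * c ^+ i.+1 / (i.+1)%:R)) //.
rewrite big_mkcond; apply: eq_bigr => i _; case: ltnP => // le_p_i.
by rewrite nth_default // !mul0r.
Qed.

Lemma pint0 c : pint 0 c = 0.
Proof. by rewrite /pint size_poly0 big_ord0. Qed.

Lemma pintD p q c : pint (p + q) c = pint p c + pint q c.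
Proof.
set n := maxn (size p) (size q).
rewrite (@pint_widen n) ?(leq_trans (size_polyD _ _)) // (@pint_widen n p) ?leq_maxl //.
rewrite (@pint_widen n q) ?leq_maxr // -big_split; apply: eq_bigr => i _.
by rewrite coefD !mulrDl.
Qed.

Lemma pintZ a p c : pint (a *: p) c = a * pint p c.
Proof.
rewrite (@pint_widen (size p)) ?size_scale_leq // /pint mulr_sumr.
by apply: eq_bigr => i _; rewrite coefZ !mulrA.
Qed.

Lemma pint_sum (I : finType) (F : I -> {poly R}) c :
  pint (\sum_i F i) c = \sum_i pint (F i) c.
Proof.
apply: (big_ind2 (fun p r => pint p c = r)); first exact: pint0.
  by move=> p1 r1 p2 r2 <- <-; rewrite pintD.
by [].
Qed.

End PolyIntegral.

Section PolyCalculus.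
Variable R : numFieldType.
Implicit Types (p q : {poly R}) (c : R).

Lemma pint_deriv p c : pint p^`() c = p.[c] - p.[0].
Proof.
rewrite (@pint_widen _ (size p)); last by rewrite (leq_trans (size_poly _ _)) // leq_pred.
rewrite (@horner_coef_wide _ (size p).+1) // big_ord_recl horner_coef0 expr0 mulr1.
rewrite addrC addKr; apply: eq_bigr => i _.
by rewrite coef_deriv -[_ *+ _]mulr_natr mulrAC mulfK // pnatr_eq0.
Qed.

Lemma pint_mul_deriv p q c :
  pint (p * q^`()) c = (p * q).[c] - (p * q).[0] - pint (p^`() * q) c.
Proof. by rewrite -pint_deriv derivM pintD [RHS]addrC addKr. Qed.

Definition primitive p : {poly R} :=
  \poly_(i < (size p).+1) (if i is j.+1 then p`_j / (j.+1)%:R else 0).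

Lemma size_primitive p : (size (primitive p) <= (size p).+1)%N.
Proof. exact: size_poly. Qed.

Lemma horner_primitive p c : (primitive p).[c] = pint p c.
Proof.
rewrite (@horner_coef_wide _ (size p).+1) ?size_poly // big_ord_recl coef_poly /=.
rewrite mul0r add0r; apply: eq_bigr => i _.
by rewrite coef_poly /= ltnS ltn_ord mulrAC.
Qed.

Lemma fact_neq0 n : (n`!)%:R != 0 :> R.
Proof. by rewrite pnatr_eq0 -lt0n fact_gt0. Qed.

Lemma nderivnE p n : p^`N(n) = ((n`!)%:R)^-1 *: p^`(n).
Proof. by rewrite nderivn_def -scaler_nat scalerA mulVf ?scale1r // fact_neq0. Qed.

Lemma derivn_size_le p n : (size p <= n.+1)%N -> p^`(n) = (p`_n *+ n`!)%:P.
Proof.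
move=> le_p_n; apply/polyP => i; rewrite coef_derivn coefC.
case: i => [|i]; first by rewrite addn0 ffactnn.
by rewrite nth_default ?mul0rn // (leq_trans le_p_n) // addnS ltnS leq_addr.
Qed.

End PolyCalculus.

Section Rodrigues.
Variable R : numFieldType.
Implicit Types (p q : {poly R}).

Definition rodrigues_poly n : {poly R} := ('X * ('X - 1)) ^+ n.

Lemma derivn_rodrigues_poly n i : (i <= n)%N ->
  exists r, (rodrigues_poly n)^`(i) = r * ('X * ('X - 1)) ^+ (n - i).
Proof.
set w := ('X * ('X - 1) : {poly R}).
elim: i => [|i IH] le_i_n; first by exists 1; rewrite subn0 mul1r.
have [r IHr] := IH (ltnW le_i_n).
exists (r^`() * w + r * w^`() *+ (n - i)).
rewrite derivnS IHr derivM deriv_exp -(subnSK le_i_n) /= exprS mulrDl mulrA.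
by rewrite mulrnAr mulrnAl [r * (_ * _)]mulrA.
Qed.

Lemma derivn_rodrigues_poly01 n m : (m < n)%N ->
  ((rodrigues_poly n)^`(m)).[0] = 0 /\ ((rodrigues_poly n)^`(m)).[1] = 0.
Proof.
move=> lt_m_n; have [r ->] := derivn_rodrigues_poly (ltnW lt_m_n).
set w := ('X * ('X - 1) : {poly R}).
have w0 : w.[0] = 0 by rewrite !hornerE ?mul0r.
have w1 : w.[1] = 0 by rewrite !hornerE ?subrr ?mulr0.
by rewrite -(subnSK lt_m_n) exprS mulrCA; split; rewrite hornerM ?w0 ?w1 mul0r.
Qed.

(* Iterated integration by parts: the boundary terms vanish since 0 and 1 are
   roots of multiplicity n of the Rodrigues polynomial. *)
Lemma pint_mul_derivn_rodrigues n q i : (i <= n)%N ->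
  pint (q * (rodrigues_poly n)^`(n)) 1
  = (-1) ^+ i * pint (q^`(i) * (rodrigues_poly n)^`(n - i)) 1.
Proof.
elim: i => [|i IH] le_i_n; first by rewrite expr0 mul1r subn0.
have lt_n_i : (n - i.+1 < n)%N by rewrite ltn_subrL; case: n le_i_n {IH}.
have [r0 r1] := derivn_rodrigues_poly01 lt_n_i.
rewrite IH ?(ltnW le_i_n) // -(subnSK le_i_n) derivnS pint_mul_deriv.
by rewrite !hornerM r0 r1 !mulr0 subrr sub0r -derivnS exprS mulrN mulN1r mulNr.
Qed.

Lemma shLeg_rodrigues n : shLeg R n = (rodrigues_poly n)^`N(n).
Proof.
have XsubnE : ('X - 1 : {poly R}) ^+ n
    = \poly_(j < n.+1) ((-1) ^+ (n - j) * ('C(n, j))%:R).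
  rewrite addrC exprDn poly_def; apply: eq_bigr => i _.
  by rewrite -mul_polyC rmorphM /= rmorphXn /= rmorphN1 -mulr_natr polyC_natr mulrAC.
apply/polyP => j; rewrite coef_nderivn /rodrigues_poly exprMn XsubnE coefXnM.
rewrite ltnNge leq_addr /= addKn !coef_poly.
case: ltnP => lt_j_n; last by rewrite mul0rn.
have -> : 'C(n + j, n) = 'C(n + j, j) by rewrite -bin_sub ?leq_addr // addKn.
rewrite -signr_odd oddD -(@signr_odd _ (n - j)) oddB //.
by rewrite -mulrnAr natrM mulrnAr mulr1.
Qed.

End Rodrigues.

Section ShiftedLegendre.
Variable R : numFieldType.
Implicit Types (p q : {poly R}).

Lemma size_shLeg n : size (shLeg R n) = n.+1.
Proof.
rewrite /shLeg size_poly_eq // mulf_neq0 ?signr_eq0 // pnatr_eq0 muln_eq0.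
by rewrite negb_or -!lt0n !bin_gt0 leqnn leq_addr.
Qed.

Lemma shLeg_orth n q : (size q <= n)%N -> pint (q * shLeg R n) 1 = 0.
Proof.
move=> le_q_n; rewrite shLeg_rodrigues nderivnE -scalerAr pintZ.
rewrite (pint_mul_derivn_rodrigues _ (leqnn n)) subnn derivn0.
by rewrite derivn_poly0 // mul0r pint0 !mulr0.
Qed.

Lemma pint_beta a b : pint ('X^a * ('X - 1) ^+ b : {poly R}) 1 * ((a + b).+1)`!%:R
  = (-1) ^+ b * (a`! * b`!)%:R.
Proof.
elim: b a => [|b IH] a.
  rewrite expr0 mulr1 /pint size_polyXn big_ord_recr /= big1 => [|i _]; last first.
    by rewrite coefXn (ltn_eqF (ltn_ord i)) !mul0r.
  rewrite add0r coefXn eqxx expr1n !mul1r addn0 factS natrM mulrA mulVf ?pnatr_eq0 //.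
  by rewrite mul1r fact0 muln1.
have primXn : ('X^a : {poly R}) = ((a.+1)%:R^-1 *: 'X^(a.+1))^`().
  by rewrite derivZ derivXn /= -scaler_nat scalerA mulVf ?pnatr_eq0 // scale1r.
have bnd0 : ((a.+1)%:R^-1 *: 'X^(a.+1) : {poly R}).[0] = 0.
  by rewrite hornerZ hornerXn expr0n mulr0.
have bnd1 : (('X - 1 : {poly R}) ^+ b.+1).[1] = 0.
  by rewrite horner_exp hornerD hornerN hornerX hornerC subrr expr0n.
have dXb : (('X - 1 : {poly R}) ^+ b.+1)^`() * ((a.+1)%:R^-1 *: 'X^(a.+1))
    = ((b.+1)%:R / (a.+1)%:R) *: ('X^(a.+1) * ('X - 1) ^+ b).
  rewrite deriv_exp derivB derivX derivC subr0 mul1r -scalerAr -scalerA scaler_nat.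
  by rewrite mulrnAl mulrC -scalerMnr.
rewrite [X in pint X]mulrC {1}primXn pint_mul_deriv !hornerM bnd0 bnd1 mulr0 mul0r.
rewrite subrr sub0r dXb pintZ -addSnnS mulNr -mulrA IH !factS !natrM exprS.
by field; rewrite nat1r pnatr_eq0.
Qed.


Lemma pint_shLeg_sqr n : pint (shLeg R n * shLeg R n) 1 = (((n + n).+1)%:R)^-1.
Proof.
apply: (mulIf (fact_neq0 R (n + n).+1)).
rewrite {2}shLeg_rodrigues nderivnE -scalerAr pintZ.
rewrite (pint_mul_derivn_rodrigues _ (leqnn n)) subnn derivn0.
rewrite derivn_size_le ?size_shLeg // mul_polyC pintZ /rodrigues_poly exprMn.
rewrite -!mulrA pint_beta /shLeg coef_poly ltnSn binn mul1n.
have sqr_sign : (-1) ^+ (n + n) = 1 :> R by rewrite -signr_odd addnn odd_double.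
have binn_fact : ('C(n + n, n) * (n`! * n`!))%N = (n + n)`!.
  by have := bin_fact (leq_addr n n); rewrite addnK.
rewrite sqr_sign mul1r factS natrM -binn_fact !natrM -mulr_natr.
rewrite -signr_odd; case: (odd n) => /=; field.
all: by rewrite -natrD nat1r pnatr_eq0 fact_neq0.
Qed.

End ShiftedLegendre.

Section NormalizedLegendre.
Variable R : rcfType.
Implicit Types (p q : {poly R}).
Local Notation P := (normLeg R).

Lemma size_normLeg n : size (P n) = n.+1.
Proof.
by rewrite /normLeg size_scale ?size_shLeg // sqrtr_eq0 -ltNge ltr0n addn1.
Qed.

Lemma normLeg_orth n q : (size q <= n)%N -> pint (q * P n) 1 = 0.
Proof. by move=> le_q_n; rewrite -scalerAr pintZ shLeg_orth // mulr0. Qed.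

Lemma pint_normLeg_mul a b : pint (P a * P b) 1 = (a == b)%:R.
Proof.
have [lt_ab|lt_ba|<-] := ltngtP a b.
- by rewrite normLeg_orth ?size_normLeg.
- by rewrite mulrC normLeg_orth ?size_normLeg.
rewrite -scalerAl -scalerAr !pintZ pint_shLeg_sqr mulrA -expr2 sqr_sqrtr ?ler0n //.
by rewrite mul2n -addnn addn1 mulfV // pnatr_eq0.
Qed.

Lemma pint_normLeg_sum N (b : 'I_N -> R) (n : 'I_N) :
  pint (P n * \sum_(m < N) b m *: P m) 1 = b n.
Proof.
rewrite mulr_sumr pint_sum (bigD1 n) //= big1 => [|m ne_mn]; last first.
  have ne_mn' : (m == n :> nat) = false by exact: negbTE ne_mn.
  by rewrite -scalerAr pintZ pint_normLeg_mul eq_sym ne_mn' mulr0.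
by rewrite -scalerAr pintZ pint_normLeg_mul eqxx mulr1 addr0.
Qed.

Lemma normLeg_span N p : (size p <= N)%N ->
  exists b : 'I_N -> R, p = \sum_(n < N) b n *: P n.
Proof.
elim: N p => [|N IH] p le_p_N.
  by exists (fun=> 0); rewrite big_ord0; apply/eqP; rewrite -size_poly_eq0 -leqn0.
have lcN : (P N)`_N != 0.
  rewrite -[N in _`_N]/(N.+1.-1) -size_normLeg -lead_coefE lead_coef_eq0.
  by rewrite -size_poly_eq0 size_normLeg.
set a := p`_N / (P N)`_N.
have [|b pE] := IH (p - a *: P N).
  apply/leq_sizeP => j; rewrite leq_eqVlt => /orP [/eqP <-|lt_Nj].
    by rewrite coefB coefZ /a divfK // subrr.
  by rewrite coefB coefZ !nth_default ?mulr0 ?subrr ?size_normLeg // (leq_trans le_p_N).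
exists (fun n : 'I_N.+1 => if unlift ord_max n is Some m then b m else a).
rewrite -[p](subrK (a *: P N)) pE big_ord_recr /= unlift_none; congr (_ + _).
apply: eq_bigr => m _.
have -> : widen_ord (leqnSn N) m = lift ord_max m.
  by apply: val_inj; exact: (esym (lift_max m)).
by rewrite liftK.
Qed.

Lemma normLeg_expansion N p : (size p <= N)%N ->
  p = \sum_(n < N) pint (P n * p) 1 *: P n.
Proof.
move=> /normLeg_span [b pE]; rewrite {1}pE; apply: eq_bigr => n _.
by rewrite pE pint_normLeg_sum.
Qed.

End NormalizedLegendre.

Section Lagrange.
Variables (R : fieldType) (m : nat) (t : 'I_m -> R).
Hypothesis t_inj : injective t.

Lemma lagr_eval i j : (lagr t j).[t i] = (i == j)%:R.
Proof.
rewrite /lagr horner_prod; have [->|ne_ij] := eqVneq i j.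
  rewrite big1 // => l ne_lj; rewrite !hornerE mulfV // subr_eq0.
  by apply: contra ne_lj => /eqP /t_inj ->.
by rewrite (bigD1 i) //= !hornerE subrr !mul0r.
Qed.

Lemma size_lagr j : (size (lagr t j) <= m)%N.
Proof.
have inv_neq0 l : l != j -> (t j - t l)^-1 != 0.
  by move=> ne_lj; rewrite invr_eq0 subr_eq0; apply: contra ne_lj => /eqP /t_inj ->.
rewrite /lagr size_prod => [|l ne_lj]; last first.
  by rewrite mulf_neq0 ?polyXsubC_eq0 // polyC_eq0 inv_neq0.
rewrite (eq_bigr (fun _ => 2%N)) => [|l ne_lj]; last first.
  rewrite mulrC size_Mmonic ?monicXsubC ?polyC_eq0 ?inv_neq0 //.
  by rewrite size_XsubC size_polyC inv_neq0.
rewrite sum_nat_const cardC1 card_ord.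
have : (0 < m)%N := leq_ltn_trans (leq0n j) (ltn_ord j).
by case: (m) => // n _; rewrite muln2 -addnn subSn ?leq_addr // addnK.
Qed.

Lemma lagrange_interp (p : {poly R}) :
  (size p <= m)%N -> p = \sum_(j < m) p.[t j] *: lagr t j.
Proof.
move=> le_p_m; apply/eqP; rewrite -subr_eq0; apply/eqP.
apply: (@roots_geq_poly_eq0 _ _ [seq t i | i <- enum 'I_m]).
- apply/allP => x /mapP [i _ ->]; rewrite /root hornerD hornerN horner_sum.
  rewrite (bigD1 i) //= big1 ?addr0 => [|j ne_ji].
    by rewrite hornerZ lagr_eval eqxx mulr1 subrr.
  by rewrite hornerZ lagr_eval eq_sym (negbTE ne_ji) mulr0.
- by rewrite map_inj_uniq ?enum_uniq.
rewrite size_map size_enum_ord (leq_trans (size_polyD _ _)) //.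
rewrite size_polyN geq_max le_p_m.
apply: (leq_trans (size_sum _ _ _)); apply/bigmax_leqP => j _.
exact: leq_trans (size_scale_leq _ _) (size_lagr j).
Qed.

End Lagrange.

Lemma eigenvalue_mulmxC (F : fieldType) m n (M : 'M[F]_(m, n)) (N : 'M[F]_(n, m)) z :
  z != 0 -> eigenvalue (M *m N) z = eigenvalue (N *m M) z.
Proof.
have swap m' n' (M' : 'M[F]_(m', n')) (N' : 'M[F]_(n', m')) :
    z != 0 -> eigenvalue (M' *m N') z -> eigenvalue (N' *m M') z.
  move=> z_neq0 /eigenvalueP [v vMN v_neq0]; apply/eigenvalueP; exists (v *m M').
    by rewrite mulmxA -(mulmxA v) vMN scalemxAl.
  apply: contra v_neq0 => /eqP vM0; move: vMN; rewrite mulmxA vM0 mul0mx => /esym/eqP.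
  by rewrite scaler_eq0 (negbTE z_neq0).
by move=> z_neq0; apply/idP/idP; apply: swap.
Qed.

Lemma eigenvalue_map_mulmxC (F K : fieldType) (f : {rmorphism F -> K}) m n
    (M : 'M[F]_(m, n)) (N : 'M[F]_(n, m)) z :
  z != 0 -> eigenvalue (map_mx f (M *m N)) z = eigenvalue (map_mx f (N *m M)) z.
Proof. by move=> z_neq0; rewrite !map_mxM eigenvalue_mulmxC. Qed.

Section HBVM.
Variable R : rcfType.
Local Notation P := (normLeg R).

Definition legGram s : 'M[R]_s :=
  \matrix_(n < s, m < s) pint (P n * primitive (P m)) 1.

Definition legVander s (c : 'I_s -> R) : 'M[R]_s := \matrix_(i < s, n < s) (P n).[c i].

Lemma hbvm_gram k s (tau : 'I_k -> R) :
    (forall p : {poly R}, (size p <= 2 * s)%N ->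
       pint p 1 = \sum_(j < k) quad_weight tau j * p.[tau j]) ->
  (Pmat s tau)^T *m Omega tau *m Imat s tau = legGram s.
Proof.
move=> quad_exact; apply/matrixP => n m; rewrite !mxE quad_exact; last first.
  have := size_primitive (P m); rewrite size_normLeg => le_prim.
  rewrite (leq_trans (size_polyMleq _ _)) // size_normLeg.
  rewrite addSn /= (leq_trans (leq_add (leqnn n) le_prim)) //.
  by rewrite -addSnnS mul2n -addnn leq_add.
apply: eq_bigr => l _; rewrite /Omega mul_mx_diag !mxE hornerM horner_primitive.
by rewrite mulrCA mulrA.
Qed.

Lemma collocA_legVander s (c : 'I_s -> R) :
    injective c -> (forall i, root (shLeg R s) (c i)) ->
  collocA c *m legVander c = legVander c *m legGram s.
Proof.
move=> c_inj c_root; apply/matrixP => i m; rewrite !mxE.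
have -> : \sum_j collocA c i j * legVander c j m = pint (P m) (c i).
  rewrite [in RHS](lagrange_interp c_inj (p := P m)) ?size_normLeg //.
  by rewrite pint_sum; apply: eq_bigr => j _; rewrite !mxE pintZ mulrC.
have le_prim : (size (primitive (P m)) <= s.+1)%N.
  by rewrite (leq_trans (size_primitive _)) // size_normLeg ltnS ltn_ord.
rewrite -horner_primitive {1}(normLeg_expansion le_prim) horner_sum big_ord_recr /=.
rewrite hornerZ [(P s).[_]]hornerZ (eqP (c_root i)) !mulr0 addr0.
by apply: eq_bigr => n _; rewrite !mxE hornerZ mulrC.
Qed.

Lemma legVander_unit s (c : 'I_s -> R) : injective c -> legVander c \in unitmx.
Proof.
move=> c_inj; rewrite -unitmx_tr -row_free_unit -kermx_eq0.
apply/rowV0P => v /sub_kermxP vV0; set q := \sum_(n < s) v 0 n *: P n.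
have q0 : q = 0.
  apply: (@roots_geq_poly_eq0 _ _ [seq c i | i <- enum 'I_s]).
  - apply/allP => x /mapP [i _ ->]; rewrite /root.
    have -> : q.[c i] = (v *m (legVander c)^T) 0 i.
      by rewrite horner_sum !mxE; apply: eq_bigr => n _; rewrite hornerZ !mxE.
    by rewrite vV0 mxE.
  - by rewrite map_inj_uniq ?enum_uniq.
  rewrite size_map size_enum_ord; apply: (leq_trans (size_sum _ _ _)).
  by apply/bigmax_leqP => n _; rewrite (leq_trans (size_scale_leq _ _)) // size_normLeg.
by apply/rowP => n; rewrite mxE -(pint_normLeg_sum (v 0) n) -/q q0 mulr0 pint0.
Qed.

End HBVM.

Theorem theorem1 (R : rcfType) (k s : nat) (tau : 'I_k -> R)
  (hs : (0 < s)%N) (hsk : (s <= k)%N)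
  (htau_inj : injective tau)
  (htau_range : forall i, 0 < tau i <= 1)
  (hexact : forall p : {poly R}, (size p <= 2 * s)%N ->
     pint p 1 = \sum_(j < k) quad_weight tau j * p.[tau j])
  (c : 'I_s -> R)
  (hc_inj : injective c)
  (hc_root : forall i, root (shLeg R s) (c i)) :
  forall z : R[i], z != 0 ->
    (eigenvalue (toCmx (hbvmA s tau)) z = eigenvalue (toCmx (collocA c)) z).
Proof.
move=> z z_neq0.
have toCmxE n (M : 'M[R]_n) : toCmx M = map_mx (real_complex R) M by [].
have V_unit := legVander_unit hc_inj.
have collocA_conj : collocA c = legVander c *m legGram R s *m invmx (legVander c).
  by rewrite -collocA_legVander // mulmxK.
apply: (@etrans _ _ (eigenvalue (toCmx (legGram R s)) z)).
  rewrite /hbvmA -mulmxA !toCmxE.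
  by apply: etrans (eigenvalue_map_mulmxC _ _ _ z_neq0) _; rewrite hbvm_gram.
rewrite collocA_conj !toCmxE.
apply: esym; apply: etrans (eigenvalue_map_mulmxC _ _ _ z_neq0) _.
by rewrite mulmxA mulVmx ?mul1mx.
Qed.
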